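(* Let $f:\mathbb N\to(0,\infty)$ be a function and $\theta>0$. Consider the putative PPF defined for every $\mathbf n=(n_1,\dots,n_k)\in\mathbb N^*$ by $$p_j(\mathbf n)=\frac{f(n_j)}{\sum_{u=1}^k f(n_u)+\theta}\ (j=1,\dots,k),\qquad p_{k+1}(\mathbf n)=\frac{\theta}{\sum_{u=1}^k f(n_u)+\theta}.$$ Suppose this putative PPF satisfies $$p_i(\mathbf n)\,p_j(\mathbf n^{i+})=p_j(\mathbf n)\,p_i(\mathbf n^{j+})\quad\text{for all }\mathbf n\in\mathbb N^*,\ i,j\in\{1,\dots,k(\mathbf n)+1\}.$$ Then there exists $a>0$ such that $f(m)=am$ for all $m\in\mathbb N$.
   Context: Notation: $\mathbb N=\{1,2,\dots\}$ and $\mathbb N^*=\bigcup_{k\ge1}\mathbb N^k$. For $\mathbf n=(n_1,\dots,n_k)$ write $k(\mathbf n)=k$. For $j\le k$, $\mathbf n^{j+}$ is $\mathbf n$ with its $j$th entry increased by $1$; $\mathbf n^{(k+1)+}=(n_1,\dots,n_k,1)$. A putative PPF is a sequence of functions $p_j$ on $\mathbb N^*$ with $p_j(\mathbf n)\ge0$ and $\sum_{j=1}^{k(\mathbf n)+1}p_j(\mathbf n)=1$. *)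

From Stdlib Require Import Reals Lra Lia Arith List Bool.
Import ListNotations.
Open Scope R_scope.

Definition in_Nstar (n : list nat) : Prop :=
  n <> nil /\ Forall (fun x => (1 <= x)%nat) n.

Definition kk (n : list nat) : nat := length n.

(* increase the entry at 0-based position i by one *)
Fixpoint incr_at (n : list nat) (i : nat) : list nat :=
  match n, i with
  | nil, _ => nil
  | x :: t, O => S x :: t
  | x :: t, S i' => x :: incr_at t i'
  end.

(* n^{j+} for 1 <= j <= k(n)+1 (1-based j, as in the paper) *)
Definition nplus (n : list nat) (j : nat) : list nat :=
  if (j <=? length n)%nat then incr_at n (j - 1) else n ++ [1%nat].

Definition fsum (f : nat -> R) (n : list nat) : R :=
  fold_right (fun x acc => f x + acc) 0 n.

(* the putative PPF p_j(n) of the corollary (1-based j; 0 outside 1..k+1) *)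
Definition pf (f : nat -> R) (theta : R) (n : list nat) (j : nat) : R :=
  if andb (1 <=? j)%nat (j <=? length n)%nat
  then f (nth (j - 1) n 0%nat) / (fsum f n + theta)
  else if (j =? S (length n))%nat then theta / (fsum f n + theta)
  else 0.

From Stdlib Require Import Reals List Lra Lia.
Import ListNotations.
Open Scope R_scope.

(* For n = [m], with A = f m, B = f (m+1), C = f 1, the identity
   p_1(n) p_2(n^{1+}) = p_2(n) p_1(n^{2+}) reads
       A/(A+θ) · θ/(B+θ) = θ/(A+θ) · A/(A+C+θ),
   and cancelling the common positive factor A θ/(A+θ) gives B = A + C.
   Hence f satisfies the recursion f (m+1) = f m + f 1, whose only solution
   is f m = f 1 · m; the constant a := f 1 is positive. *)

Lemma in_Nstar_singleton (m : nat) : (1 <= m)%nat -> in_Nstar [m].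
Proof.
  intros hm; split; [discriminate | constructor; [exact hm | constructor]].
Qed.

Lemma exchange_singleton_unfold (f : nat -> R) (theta : R) (m : nat) :
  pf f theta [m] 1 * pf f theta (nplus [m] 1) 2
  = pf f theta [m] 2 * pf f theta (nplus [m] 2) 1 <->
  f m / (f m + theta) * (theta / (f (S m) + theta))
  = theta / (f m + theta) * (f m / (f m + f 1%nat + theta)).
Proof.
  cbn; rewrite !Rplus_0_r; reflexivity.
Qed.

Lemma exchange_cancel (A B C theta : R) :
  0 < A -> 0 < B -> 0 < C -> 0 < theta ->
  A / (A + theta) * (theta / (B + theta))
  = theta / (A + theta) * (A / (A + C + theta)) ->
  B = A + C.
Proof.
  intros hA hB hC ht heq.
  assert (hfac : 0 < A * theta / (A + theta)).
  { apply Rdiv_lt_0_compat; nra. }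
  assert (hinv : / (B + theta) = / (A + C + theta)).
  { apply (Rmult_eq_reg_l (A * theta / (A + theta))); [| lra].
    unfold Rdiv in *.
    transitivity (A * / (A + theta) * (theta * / (B + theta))); [ring |].
    rewrite heq; ring. }
  apply (f_equal Rinv) in hinv; rewrite !Rinv_inv in hinv; lra.
Qed.

Lemma additive_recursion_linear (g : nat -> R) :
  (forall m, (1 <= m)%nat -> g (S m) = g m + g 1%nat) ->
  forall m, (1 <= m)%nat -> g m = g 1%nat * INR m.
Proof.
  intros hrec m hm; induction m as [| m IH]; [lia |].
  destruct m as [| m]; [simpl; ring |].
  rewrite hrec, IH by lia; rewrite (S_INR (S m)); ring.
Qed.

Theorem corollary1 (f : nat -> R) (theta : R)
  (hf : forall m : nat, (1 <= m)%nat -> 0 < f m)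
  (htheta : 0 < theta)
  (hsym : forall (n : list nat), in_Nstar n ->
     forall i j : nat,
       (1 <= i <= S (kk n))%nat -> (1 <= j <= S (kk n))%nat ->
       pf f theta n i * pf f theta (nplus n i) j
       = pf f theta n j * pf f theta (nplus n j) i) :
  exists a : R, 0 < a /\ forall m : nat, (1 <= m)%nat -> f m = a * INR m.
Proof.
  assert (hrec : forall m, (1 <= m)%nat -> f (S m) = f m + f 1%nat).
  { intros m hm.
    pose proof (hsym [m] (in_Nstar_singleton m hm) 1%nat 2%nat
                  ltac:(cbn; lia) ltac:(cbn; lia)) as hex.
    apply exchange_singleton_unfold in hex.
    apply (exchange_cancel _ _ _ theta); [apply hf; lia .. | exact htheta | exact hex]. }
  exists (f 1%nat); split; [apply hf; lia |].
  exact (additive_recursion_linear f hrec).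
Qed.
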